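(* Let $\mathcal{C}$ be a (positive) monopole and let $(\mathcal{H},\mathcal{E},U)$ be a capacitor for $\mathcal{C}$. The following are equivalent: (1) the positive monopole $\mathcal{C}$ has enough injectives; (2) every object of $\mathcal{C}$ that is complete relative to $\mathcal{H}$ is injective in the positive monopole $\mathcal{C}$; (3) the injective objects of the positive monopole $\mathcal{C}$ are precisely the objects that are complete relative to $\mathcal{H}$.
   Context: A refinement of a category $\mathcal{C}$ is a subcategory containing all objects and all isomorphisms of $\mathcal{C}$. A (positive) monopole is a category $\mathcal{C}$ with a distinguished refinement $\mathcal{C}_+$ whose arrows are called positive. An object $x$ of a monopole is injective if for every positive arrow $g:a\to b$ and every arrow $f:a\to x$ there is an arrow $h:b\to x$ with $hg=f$; the monopole has enough injectives if every object $a$ admits a positive arrow $a\to x$ with $x$ injective. An object $z$ of a category is amphi-terminal if every object has at least one arrow to $z$ and $z$ has at most one arrow to any object. For a refinement $\mathcal{H}$ of $\mathcal{C}_+$ and an object $x$, let $x\downarrow_{\mathcal{H}}\mathcal{C}$ be the category whose objects are arrows $f:x\to a$ in $\mathcal{H}$, with morphisms from $f:x\to a$ to $g:x\to b$ the arrows $\xi:a\to b$ of $\mathcal{C}$ with $\xi f=g$. The object $x$ is complete relative to $\mathcal{H}$ if $1_x$ is an amphi-terminal object of $x\downarrow_{\mathcal{H}}\mathcal{C}$. For a category $\mathcal{E}$ and functor $U:\mathcal{E}\to\mathcal{C}$, let $x\downarrow_{\mathcal{H}}U$ have objects pairs $(b,f)$, $b\in\mathcal{E}$, $f:x\to Ub$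 in $\mathcal{H}$, and morphisms $(b,f)\to(c,g)$ the arrows $\varphi:b\to c$ of $\mathcal{E}$ with $U\varphi\circ f=g$. A capacitor for $\mathcal{C}$ is a triple $(\mathcal{H},\mathcal{E},U)$ with $\mathcal{H}$ a refinement of $\mathcal{C}_+$ and $U:\mathcal{E}\to\mathcal{C}$ faithful such that: (i) every object $x$ has a terminal object $(Jx,\eta_x:x\to UJx)$ of $x\downarrow_{\mathcal{H}}U$, and these give rise to a functor $J_+:\mathcal{C}_+^{\mathrm{op}}\to\mathcal{E}$ with $J_+x=Jx$ and $U(J_+f)\circ\eta_y\circ f=\eta_x$ for every $f:x\to y$ in $\mathcal{C}_+$; (ii) for every arrow $f:x\to y$ of $\mathcal{C}$ there is at most one arrow $\psi:Jx\to Jy$ of $\mathcal{E}$ with $U\psi\circ\eta_x=\eta_y\circ f$, and every arrow $h:UJx\to UJx$ with $h\circ\eta_x=\eta_x$ is the identity. *)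

Set Implicit Arguments.
Unset Strict Implicit.

(** Categories, with Leibniz equality of arrows. [comp g f] is g ∘ f. *)
Record Category := {
  Obj :> Type;
  Hom : Obj -> Obj -> Type;
  cid : forall a, Hom a a;
  comp : forall a b c, Hom b c -> Hom a b -> Hom a c;
  comp_assoc : forall a b c d (h : Hom c d) (g : Hom b c) (f : Hom a b),
      comp h (comp g f) = comp (comp h g) f;
  comp_id_l : forall a b (f : Hom a b), comp (cid b) f = f;
  comp_id_r : forall a b (f : Hom a b), comp f (cid a) = f
}.

Arguments Hom {C} a b : rename.
Arguments cid {C} a : rename.
Arguments comp {C a b c} g f : rename.

Definition ArrowClass (C : Category) := forall a b : C, Hom a b -> Prop.
Identity Coercion ArrowClass_fun : ArrowClass >-> Funclass.

Definition AllArrows (C : Category) : ArrowClass C := fun _ _ _ => True.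

Definition is_refinement_of (C : Category) (Q P : ArrowClass C) : Prop :=
  (forall a : C, P a a (cid a)) /\
  (forall (a b c : C) (g : Hom b c) (f : Hom a b),
      P b c g -> P a b f -> P a c (comp g f)) /\
  (forall (a b : C) (f : Hom a b), P a b f -> Q a b f) /\
  (forall (a b : C) (f : Hom a b) (g : Hom b a),
      Q a b f -> Q b a g -> comp g f = cid a -> comp f g = cid b -> P a b f).

Definition is_refinement (C : Category) (P : ArrowClass C) : Prop :=
  @is_refinement_of C (@AllArrows C) P.

Record Monopole := {
  mcat :> Category;
  Pos : ArrowClass mcat;
  Pos_refinement : @is_refinement mcat Pos
}.
Arguments Pos {m} [a b] f : rename.

Section MonopoleDefs.
Variable C : Monopole.

Definition injective_obj (x : C) : Prop :=
  forall (a b : C) (g : Hom a b), Pos g ->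
  forall f : Hom a x, exists h : Hom b x, comp h g = f.

Definition enough_injectives : Prop :=
  forall a : C, exists (x : C) (i : Hom a x), Pos i /\ injective_obj x.

(** amphi-terminality of [1_x] in [x ↓_H C]:
    objects are (a, f : x -> a) with f in H; arrows (a,f) -> (b,g) are
    ξ : a -> b with ξ ∘ f = g. *)
Definition complete_rel (H : ArrowClass C) (x : C) : Prop :=
  (* every object has at least one arrow to (x, 1_x) *)
  (forall (a : C) (f : Hom x a), H x a f ->
      exists xi : Hom a x, comp xi f = cid x) /\
  (* (x, 1_x) has at most one arrow to any object *)
  (forall (b : C) (g : Hom x b), H x b g ->
      forall xi xi' : Hom x b, comp xi (cid x) = g -> comp xi' (cid x) = g ->
      xi = xi').

End MonopoleDefs.

Record Functor (E C : Category) := {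
  fobj :> E -> C;
  fmap : forall a b : E, Hom a b -> Hom (fobj a) (fobj b);
  fmap_id : forall a : E, fmap (cid a) = cid (fobj a);
  fmap_comp : forall (a b c : E) (g : Hom b c) (f : Hom a b),
      fmap (comp g f) = comp (fmap g) (fmap f)
}.
Arguments fmap {E C} F {a b} f : rename.

Definition faithful (E C : Category) (U : Functor E C) : Prop :=
  forall (a b : E) (f g : Hom a b), fmap U f = fmap U g -> f = g.

(** Capacitor (H, E, U) for the monopole C, together with the chosen
    terminal objects (J x, eta x) of x ↓_H U. *)
Record Capacitor (C : Monopole) := {
  capH : ArrowClass C;
  capE : Category;
  capU : Functor capE C;
  capJ : C -> capE;
  capEta : forall x : C, Hom x (capU (capJ x));
  capH_refinement : @is_refinement_of C (@Pos C) capH;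
  capU_faithful : faithful capU;
  (* (i) (J x, eta x) is a terminal object of x ↓_H U *)
  capEta_H : forall x : C, capH (capEta x);
  capTerminal : forall (x : C) (b : capE) (f : Hom x (capU b)), capH f ->
      exists phi : Hom b (capJ x),
        comp (fmap capU phi) f = capEta x /\
        forall phi' : Hom b (capJ x), comp (fmap capU phi') f = capEta x ->
          phi' = phi;
  (* (i) these give rise to a functor J_+ : C_+^op -> E *)
  capJplus : exists Jp : forall (x y : C) (f : Hom x y), Pos f ->
                           Hom (capJ y) (capJ x),
      (forall (x : C) (p : Pos (cid x)), Jp x x (cid x) p = cid (capJ x)) /\
      (forall (x y z : C) (g : Hom y z) (f : Hom x y)
              (pg : Pos g) (pf : Pos f) (pgf : Pos (comp g f)),
          Jp x z (comp g f) pgf = comp (Jp x y f pf) (Jp y z g pg)) /\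
      (forall (x y : C) (f : Hom x y) (p : Pos f),
          comp (comp (fmap capU (Jp x y f p)) (capEta y)) f = capEta x);
  capUnique : forall (x y : C) (f : Hom x y) (psi psi' : Hom (capJ x) (capJ y)),
      comp (fmap capU psi) (capEta x) = comp (capEta y) f ->
      comp (fmap capU psi') (capEta x) = comp (capEta y) f ->
      psi = psi';
  capRigid : forall (x : C) (h : Hom (capU (capJ x)) (capU (capJ x))),
      comp h (capEta x) = capEta x -> h = cid _
}.

(* An object is complete relative to H exactly when every H-arrow out of it splits.
   Injectives are complete, and every UJa is complete by rigidity of eta, so
   eta_a : a -> UJa is a positive arrow into a complete object: if complete objects
   are injective there are enough injectives.  Conversely, a complete x embeds
   positively into an injective y; composing with U(J_+ i) o eta_y and the
   splitting of eta_x yields a retraction of x -> y, and retracts of injectives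
   are injective. *)

Set Implicit Arguments.
Unset Strict Implicit.

Section Monopoles.
Variable C : Monopole.

Lemma injective_obj_retract (x y : C) (i : Hom x y) (r : Hom y x) :
  comp r i = cid x -> injective_obj y -> injective_obj x.
Proof.
  intros ri_id inj_y a b g pos_g f.
  destruct (inj_y a b g pos_g (comp i f)) as [h hg].
  exists (comp r h).
  rewrite <- comp_assoc, hg, comp_assoc, ri_id, comp_id_l.
  reflexivity.
Qed.

Lemma complete_relE (H : ArrowClass C) (x : C) :
  complete_rel H x <->
  (forall (a : C) (f : Hom x a), H x a f -> exists r : Hom a x, comp r f = cid x).
Proof.
  split; [intros [split_H _]; exact split_H |].
  intros split_H; split; [exact split_H |].
  (* an arrow (x, 1_x) -> (b, g) of x ↓_H C can only be g itself *)
  intros b g _ xi xi' xi_g xi'_g.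
  rewrite comp_id_r in xi_g, xi'_g.
  congruence.
Qed.

Lemma injective_complete_rel (H : ArrowClass C) (x : C) :
  (forall (a b : C) (f : Hom a b), H a b f -> Pos f) ->
  injective_obj x -> complete_rel H x.
Proof.
  intros H_Pos inj_x; apply complete_relE.
  intros a f Hf.
  exact (inj_x x a f (H_Pos x a f Hf) (cid x)).
Qed.

End Monopoles.

Section Capacitors.
Variable C : Monopole.
Variable K : Capacitor C.

Let H := capH K.
Let U := capU K.
Let J := capJ K.
Let eta := capEta K.

Lemma capH_Pos (a b : C) (f : Hom a b) : H f -> Pos f.
Proof. destruct (capH_refinement K) as [_ [_ [H_Pos _]]]. exact (H_Pos a b f). Qed.

Lemma capH_comp (a b c : C) (g : Hom b c) (f : Hom a b) :
  H g -> H f -> H (comp g f).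
Proof. destruct (capH_refinement K) as [_ [H_comp _]]. exact (H_comp a b c g f). Qed.

Lemma complete_rel_capJ (a : C) : complete_rel H (U (J a)).
Proof.
  apply complete_relE; intros b f Hf.
  assert (H_eta_f_eta : H (comp (eta b) (comp f (eta a)))).
  { apply capH_comp; [apply capEta_H |].
    apply capH_comp; [exact Hf | apply capEta_H]. }
  destruct (@capTerminal _ K a (J b) _ H_eta_f_eta) as [phi [phi_eta _]].
  exists (comp (fmap U phi) (eta b)).
  apply (@capRigid _ K a).
  rewrite <- !comp_assoc; exact phi_eta.
Qed.

Lemma complete_rel_Pos_split (x y : C) (i : Hom x y) :
  complete_rel H x -> Pos i -> exists r : Hom y x, comp r i = cid x.
Proof.
  intros complete_x pos_i.
  destruct (proj1 (complete_relE H x) complete_x _ (eta x) (capEta_H K x))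
    as [r r_eta].
  destruct (capJplus K) as [Jp [_ [_ Jp_eta]]].
  exists (comp r (comp (fmap U (Jp x y i pos_i)) (eta y))).
  rewrite <- comp_assoc; unfold U, eta; rewrite Jp_eta.
  exact r_eta.
Qed.

Lemma enough_injectivesP :
  enough_injectives C <-> (forall x : C, complete_rel H x -> injective_obj x).
Proof.
  split.
  - intros enough x complete_x.
    destruct (enough x) as [y [i [pos_i inj_y]]].
    destruct (complete_rel_Pos_split complete_x pos_i) as [r ri_id].
    exact (injective_obj_retract ri_id inj_y).
  - intros complete_inj a.
    exists (U (J a)), (eta a); split.
    + apply capH_Pos, capEta_H.
    + apply complete_inj, complete_rel_capJ.
Qed.

Lemma complete_injective_iff :
  (forall x : C, complete_rel H x -> injective_obj x) <->
  (forall x : C, injective_obj x <-> complete_rel H x).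
Proof.
  split.
  - intros complete_inj x; split; [apply injective_complete_rel, capH_Pos |].
    apply complete_inj.
  - intros inj_iff x; apply inj_iff.
Qed.

End Capacitors.

Theorem mainTheorem2 (C : Monopole) (K : Capacitor C) :
  (enough_injectives C <->
     (forall x : C, complete_rel (capH K) x -> injective_obj x)) /\
  ((forall x : C, complete_rel (capH K) x -> injective_obj x) <->
     (forall x : C, injective_obj x <-> complete_rel (capH K) x)).
Proof. split; [apply enough_injectivesP | apply complete_injective_iff]. Qed.
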